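(* Let $N\ge 2$, $S\ge 1$, $d\ge 1$ be integers. If $d\ge N-1$, then for every next-token distribution $\pi$ on $[N]^S$ we have $d_{KL}(\pi,\mathcal{L}(N,S,d))=0$. Conversely, if $d<N-1$, there exists a next-token distribution $\pi$ on $[N]^S$ such that $d_{KL}(\pi,\mathcal{L}(N,S,d))>0$.
   Context: $[N]=\{1,\dots,N\}$. A next-token distribution $\pi$ consists of a prior probability distribution on $[N]^S$ together with, for each $t_{1:S}\in[N]^S$, a conditional probability distribution $\pi_{t_{1:S}}=\pi(\cdot\mid t_{1:S})$ on $[N]$. For $f:[N]^S\to\mathbb{R}^N$, $d_{KL}(\pi,f):=\mathbb{E}_{t_{1:S}\sim\pi}\big[\mathrm{KL}(\pi_{t_{1:S}}\,\|\,\mathrm{Softmax}(f(t_{1:S})))\big]$. The set of sequence encoders is $\mathcal{L}(N,S,d):=\{f_{W,E}: W\in\mathbb{R}^{N\times d},\ E:[N]^S\to\mathbb{R}^d\}$ with $f_{W,E}(t_{1:S})=W E(t_{1:S})$, and $d_{KL}(\pi,\mathcal{L}(N,S,d)):=\inf_{f\in\mathcal{L}(N,S,d)}d_{KL}(\pi,f)$. *)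

From HB Require Import structures.
From mathcomp Require Import all_boot all_order all_algebra.
From mathcomp Require Import all_classical all_reals all_analysis.
Set Implicit Arguments. Unset Strict Implicit. Unset Printing Implicit Defensive.
Import Order.TTheory GRing.Theory Num.Theory.
Local Open Scope ring_scope.
Local Open Scope classical_set_scope.

(* [N] is represented by 'I_N (0-indexed), [N]^S by S.-tuple 'I_N. *)
Definition seqs (N S : nat) := (S.-tuple 'I_N)%type.

Definition is_distr {R : realType} {T : finType} (p : T -> R) : Prop :=
  (forall x, 0 <= p x) /\ \sum_(x : T) p x = 1.

Definition is_next_token_distr {R : realType} (N S : nat)
  (prior : seqs N S -> R) (cond : seqs N S -> 'I_N -> R) : Prop :=
  is_distr prior /\ forall t, is_distr (cond t).

Definition softmax {R : realType} {N : nat} (v : 'cV[R]_N) : 'I_N -> R :=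
  fun i => expR (v i 0) / \sum_(j < N) expR (v j 0).

(* KL(p || q) = sum_i p_i log(p_i / q_i), with 0 log 0 = 0
   (automatic since 0 * _ = 0). *)
Definition KL {R : realType} {N : nat} (p q : 'I_N -> R) : R :=
  \sum_(i < N) p i * ln (p i / q i).

Definition dKL {R : realType} (N S : nat)
  (prior : seqs N S -> R) (cond : seqs N S -> 'I_N -> R)
  (f : seqs N S -> 'cV[R]_N) : R :=
  \sum_(t : seqs N S) prior t * KL (cond t) (softmax (f t)).

Definition encoders {R : realType} (N S d : nat) : set (seqs N S -> 'cV[R]_N) :=
  [set f | exists (W : 'M[R]_(N, d)) (E : seqs N S -> 'cV[R]_d),
           f = fun t => W *m E t].

Definition dKL_L {R : realType} (N S d : nat)
  (prior : seqs N S -> R) (cond : seqs N S -> 'I_N -> R) : R :=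
  inf [set dKL prior cond f | f in @encoders R N S d].

From HB Require Import structures.
From mathcomp Require Import all_boot all_order all_algebra.
From mathcomp Require Import all_classical all_reals all_analysis.
From mathcomp Require Import lra zify.
Import Order.TTheory GRing.Theory Num.Theory.
Local Open Scope ring_scope.

(* If d >= N - 1, mixing a conditional distribution with the uniform one, with weight
   1 - exp (-e), yields a positive distribution q within KL divergence e of it, and q is
   exactly the softmax of the logits log q - log q_N, whose last coordinate vanishes, so they
   factor through R^d.
   If d < N - 1, take the uniform prior and the conditionals softmax (D e_k), where k is the
   first token, and look at d + 1 constant contexts whose tokens are distinct and different
   from the last one.  Their encodings in R^d are linearly dependent, hence so are their
   logits centered at the last coordinate, whereas the centered targets D e_k are not; so
   some centered logit is off by about D / (d + 1).  As the conditionals are bounded below,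
   a small KL divergence pins every log-probability, hence every centered logit, within a
   constant of its target, which is impossible once D > 6 (d + 1). *)

Set Implicit Arguments.
Unset Strict Implicit.
Unset Printing Implicit Defensive.

Section Softmax.
Variables (R : realType) (N : nat).
Implicit Types (v : 'cV[R]_N) (q : 'I_N -> R).

Lemma softmax_denom_gt0 v (i0 : 'I_N) : 0 < \sum_(j < N) expR (v j 0).
Proof.
rewrite (bigD1 i0) //= ltr_pwDl ?expR_gt0 //.
by apply: sumr_ge0 => j _; rewrite ltW ?expR_gt0.
Qed.

Lemma softmax_gt0 v i : 0 < softmax v i.
Proof. by rewrite divr_gt0 ?expR_gt0 ?(softmax_denom_gt0 v i). Qed.

Lemma sum_softmax v (i0 : 'I_N) : \sum_i softmax v i = 1.
Proof. by rewrite -mulr_suml mulfV // gt_eqF // (softmax_denom_gt0 v i0). Qed.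

Lemma is_distr_softmax v (i0 : 'I_N) : is_distr (softmax v).
Proof. by split=> [i|]; rewrite ?ltW ?softmax_gt0 ?(sum_softmax v i0). Qed.

Lemma ln_softmaxB v i k : ln (softmax v i) - ln (softmax v k) = v i 0 - v k 0.
Proof.
have Z_gt0 : 0 < \sum_(j < N) expR (v j 0) := softmax_denom_gt0 v i.
rewrite /softmax !ln_div ?posrE ?expR_gt0 // !expRK; lra.
Qed.

Lemma softmax_col_lnD q c :
  (forall i, 0 < q i) -> \sum_i q i = 1 -> softmax (\col_i (ln (q i) + c)) = q.
Proof.
move=> q_gt0 q_sum; apply/funext => i; rewrite /softmax.
under eq_bigr => j _ do rewrite mxE expRD lnK ?posrE //.
by rewrite -mulr_suml q_sum mul1r mxE expRD lnK ?posrE // mulfK ?gt_eqF ?expR_gt0.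
Qed.

Lemma softmax_ge v D i :
  (forall j, 0 <= v j 0 <= D) -> (N%:R * expR D)^-1 <= softmax v i.
Proof.
move=> v_bnd; have Z_gt0 := softmax_denom_gt0 v i.
have Z_le : \sum_(j < N) expR (v j 0) <= N%:R * expR D.
  rewrite mulr_natl -[X in _ *+ X](card_ord N) -sumr_const.
  by apply: ler_sum => j _; rewrite ler_expR; case/andP: (v_bnd j).
have exp_ge1 : 1 <= expR (v i 0).
  by rewrite -expR0 ler_expR; case/andP: (v_bnd i).
have NexpD_gt0 : 0 < N%:R * expR D := lt_le_trans Z_gt0 Z_le.
rewrite /softmax -[X in X <= _]mul1r ler_pM ?invr_ge0 ?(ltW NexpD_gt0) //.
by rewrite lef_pV2 ?posrE.
Qed.

Lemma ln_softmax_close_centered (u v : 'cV[R]_N) (a : R) i l :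
  (forall k, `|ln (softmax u k) - ln (softmax v k)| <= a) ->
  `|u i 0 - u l 0 - (v i 0 - v l 0)| <= a + a.
Proof.
move=> close; rewrite -!ln_softmaxB.
by move: (close i) (close l); rewrite !ler_norml => /andP[? ?] /andP[? ?]; apply/andP; split; lra.
Qed.

End Softmax.

Section KullbackLeibler.
Variable R : realType.
Implicit Types (a b r : R).

Definition KL_term a b := a * ln (a / b) + b - a.

Lemma ln_le_subr1 r : 0 < r -> ln r <= r - 1.
Proof. by move=> r_gt0; have := @le_ln1Dx R (r - 1); rewrite [1 + _]addrC subrK; apply; lra. Qed.

Lemma KL_termE a b : 0 < a -> 0 < b -> KL_term a b = a * (b / a - 1 - ln (b / a)).
Proof.
move=> a_gt0 b_gt0; rewrite /KL_term -invf_div lnV ?posrE ?divr_gt0 //.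
by rewrite !mulrBr mulrCA mulfV ?gt_eqF // mulrN mulr1; lra.
Qed.

Lemma KL_term_ge0 a b : 0 <= a -> 0 < b -> 0 <= KL_term a b.
Proof.
rewrite le0r => /orP[/eqP-> b_gt0 | a_gt0 b_gt0]; first by rewrite /KL_term mul0r add0r subr0 ltW.
rewrite KL_termE // mulr_ge0 ?(ltW a_gt0) //.
by have := ln_le_subr1 (divr_gt0 b_gt0 a_gt0); lra.
Qed.

Lemma norm_ln_le3 r : 0 < r -> r - 1 - ln r < 1 / 4 -> `|ln r| <= 3.
Proof.
move=> r_gt0 gap_lt.
have [s_gt0 sqr_s] : 0 < Num.sqrt r /\ Num.sqrt r ^+ 2 = r.
  by rewrite sqrtr_gt0 sqr_sqrtr ?ltW.
set s := Num.sqrt r in s_gt0 sqr_s.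
(* ln r = 2 ln s <= 2 (s - 1), so the gap dominates (s - 1)^2 *)
have ln_r : ln r <= 2 * (s - 1).
  by rewrite -sqr_s lnXn // mulr2n mulr_natl; have := ln_le_subr1 s_gt0; lra.
have r_gt : 1 / 4 < r by rewrite -sqr_s; nra.
have r_lt : r < 9 / 4 by rewrite -sqr_s; nra.
have lnV_r : ln r^-1 <= r^-1 - 1 by rewrite ln_le_subr1 ?invr_gt0.
rewrite lnV ?posrE // in lnV_r.
have rV_lt : r^-1 < 4.
  by rewrite -[X in X < _]mul1r ltr_pdivrMr // -ltr_pdivrMl //; lra.
rewrite ler_norml; have := ln_le_subr1 r_gt0; lra.
Qed.

Lemma KL_term_small a b : 0 < a -> 0 < b -> KL_term a b < a / 4 -> `|ln b - ln a| <= 3.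
Proof.
move=> a_gt0 b_gt0; rewrite KL_termE // -ln_div ?posrE // => small.
by apply: norm_ln_le3; rewrite ?divr_gt0 // -(ltr_pM2l a_gt0) mul1r.
Qed.

Variable N : nat.
Implicit Types p q : 'I_N -> R.

Lemma KL_sum_term p q :
  \sum_i p i = 1 -> \sum_i q i = 1 -> KL p q = \sum_i KL_term (p i) (q i).
Proof.
move=> p_sum q_sum; rewrite /KL /KL_term.
under [RHS]eq_bigr => i _ do rewrite -addrA.
by rewrite big_split /= sumrB p_sum q_sum subrr addr0.
Qed.

Lemma KL_term_le_KL p q i :
  (forall i, 0 <= p i) -> (forall i, 0 < q i) -> \sum_i p i = 1 -> \sum_i q i = 1 ->
  KL_term (p i) (q i) <= KL p q.
Proof.
move=> p_ge0 q_gt0 p_sum q_sum; rewrite KL_sum_term // (bigD1 i) //= lerDl.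
by apply: sumr_ge0 => j _; apply: KL_term_ge0.
Qed.

Lemma KL_ge0 p q :
  (forall i, 0 <= p i) -> (forall i, 0 < q i) -> \sum_i p i = 1 -> \sum_i q i = 1 ->
  0 <= KL p q.
Proof.
move=> p_ge0 q_gt0 p_sum q_sum; rewrite KL_sum_term //.
by apply: sumr_ge0 => i _; apply: KL_term_ge0.
Qed.

Lemma KL_le p q e :
  (forall i, 0 <= p i) -> \sum_i p i = 1 -> (forall i, expR (- e) * p i <= q i) ->
  KL p q <= e.
Proof.
move=> p_ge0 p_sum q_ge; rewrite /KL -[X in _ <= X]mul1r -p_sum mulr_suml.
apply: ler_sum => i _; have := p_ge0 i; rewrite le0r => /orP[/eqP-> | p_gt0].
  by rewrite !mul0r.
have q_gt0 : 0 < q i by apply: lt_le_trans (q_ge i); rewrite mulr_gt0 ?expR_gt0.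
rewrite ler_pM2l // -[X in _ <= X]expRK ler_ln ?posrE ?divr_gt0 ?expR_gt0 //.
rewrite ler_pdivrMr //.
have := ler_wpM2l (ltW (expR_gt0 e)) (q_ge i).
by rewrite mulrA -expRD subrr expR0 mul1r.
Qed.

End KullbackLeibler.

Lemma KL_softmax_ge0 (R : realType) N (p : 'I_N -> R) (v : 'cV[R]_N) :
  is_distr p -> 0 <= KL p (softmax v).
Proof.
case: N p v => [|n] p v [p_ge0 p_sum].
  by move: p_sum; rewrite big_ord0 => /eqP; rewrite eq_sym oner_eq0.
by rewrite KL_ge0 // => [i|]; rewrite ?softmax_gt0 ?(sum_softmax _ ord0).
Qed.

Section Smoothing.
Variables (R : realType) (N : nat).
Implicit Types (a : R) (p : 'I_N -> R).

Definition smooth a p : 'I_N -> R := fun i => a * p i + (1 - a) / N%:R.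

Lemma smooth_gt0 a p i : 0 <= a < 1 -> (forall j, 0 <= p j) -> 0 < smooth a p i.
Proof.
case/andP=> a_ge0 a_lt1 p_ge0; rewrite ltr_wpDl ?mulr_ge0 // divr_gt0 ?subr_gt0 //.
by rewrite ltr0n (leq_ltn_trans (leq0n i)).
Qed.

Lemma sum_smooth a p : (0 < N)%N -> \sum_i p i = 1 -> \sum_i smooth a p i = 1.
Proof.
move=> N_gt0 p_sum; rewrite big_split /= -mulr_sumr p_sum mulr1 sumr_const card_ord.
by rewrite -[_ *+ N]mulr_natr divfK ?pnatr_eq0 -?lt0n // addrC subrK.
Qed.

Lemma KL_smooth_le p e : 0 < e ->
  (forall i, 0 <= p i) -> \sum_i p i = 1 -> KL p (smooth (expR (- e)) p) <= e.
Proof.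
move=> e_gt0 p_ge0 p_sum; apply: KL_le => // i.
by rewrite lerDl divr_ge0 ?ler0n // subr_ge0 ltW // expR_lt1 oppr_lt0.
Qed.

End Smoothing.

Lemma pid_mx_mul_id (F : pzRingType) m n r (A : 'M[F]_(m, n)) :
  (forall (i : 'I_m) j, (r <= i)%N -> A i j = 0) -> pid_mx r *m A = A.
Proof.
move=> A_low; apply/matrixP => i j; rewrite !mxE (bigD1 i) //= big1 => [|k k_neq_i].
  rewrite !mxE eqxx addr0 /=.
  by case: ltnP => [_|r_le_i]; [rewrite mul1r | rewrite mul0r A_low].
by rewrite !mxE eq_sym (inj_eq val_inj) (negbTE k_neq_i) mul0r.
Qed.

Definition centered_log (R : realType) n (q : 'I_n.+1 -> R) : 'cV[R]_n.+1 :=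
  \col_i (ln (q i) - ln (q ord_max)).

Lemma softmax_pid_mx_centered_log (R : realType) n d (q : 'I_n.+1 -> R) :
  (n <= d)%N -> (forall i, 0 < q i) -> \sum_i q i = 1 ->
  softmax ((pid_mx d : 'M[R]_(n.+1, d)) *m (pid_mx d *m centered_log q)) = q.
Proof.
move=> le_nd q_gt0 q_sum; rewrite mulmxA pid_mx_id // pid_mx_mul_id.
  exact: softmax_col_lnD.
move=> i j le_di; rewrite mxE.
have -> : i = ord_max by apply/val_inj/eqP; rewrite /= eqn_leq -ltnS ltn_ord (leq_trans le_nd).
by rewrite subrr.
Qed.

Lemma exists_nontrivial_dependency (F : fieldType) m n (E : 'I_m -> 'cV[F]_n) :
  (n < m)%N -> exists2 lam : 'rV[F]_m, lam != 0 & \sum_j lam 0 j *: E j = 0.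
Proof.
move=> lt_nm; pose A : 'M[F]_(m, n) := \matrix_(j, k) E j k 0.
have : ~~ row_free A by rewrite -row_leq_rank -ltnNge (leq_ltn_trans (rank_leq_col A)).
rewrite -kermx_eq0 => /rowV0Pn[lam /sub_kermxP lamA lam_neq0].
exists lam => //; apply/matrixP => k i; rewrite summxE !mxE (ord1 i).
transitivity ((lam *m A) 0 k); last by rewrite lamA mxE.
by rewrite mxE; apply: eq_bigr => j _; rewrite !mxE.
Qed.

Lemma low_rank_centered_logits_bound (R : realFieldType) N d (W : 'M[R]_(N, d))
    (E : 'I_d.+1 -> 'cV[R]_d) (w : 'I_d.+1 -> 'I_N) (l : 'I_N) (D e : R) :
  injective w -> (forall j, w j != l) ->
  (forall j i, `|(W *m E j) i 0 - (W *m E j) l 0 - (if i == w j then D else 0)| <= e) ->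
  D <= e * d.+1%:R.
Proof.
move=> w_inj w_neq_l close.
have [lam lam_neq0 lamE] := exists_nontrivial_dependency E (ltnSn d).
pose u j i := (W *m E j) i 0 - (W *m E j) l 0.
have lam_u i : \sum_j lam 0 j * u j i = 0.
  have lam_WE k : \sum_j lam 0 j * (W *m E j) k 0 = 0.
    transitivity ((W *m \sum_j lam 0 j *: E j) k 0); last by rewrite lamE mulmx0 mxE.
    rewrite mulmx_sumr summxE; apply: eq_bigr => j _.
    by rewrite -scalemxAr [RHS]mxE.
  by under eq_bigr do rewrite mulrBr; rewrite sumrB !lam_WE subr0.
(* at coordinate w k the targets single out lam k, as the w j are distinct *)
have lamD k : lam 0 k * D = \sum_j lam 0 j * ((if w k == w j then D else 0) - u j (w k)).
  under eq_bigr do rewrite mulrBr.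
  rewrite sumrB lam_u subr0 (bigD1 k) //= eqxx big1 ?addr0 // => j /negbTE j_neq_k.
  by rewrite (inj_eq w_inj) eq_sym j_neq_k mulr0.
have norm_lamD k : `|lam 0 k| * D <= e * \sum_j `|lam 0 j|.
  apply: le_trans (_ : `|lam 0 k * D| <= _); first by rewrite normrM ler_wpM2l // ler_norm.
  rewrite lamD (le_trans (ler_norm_sum _ _ _)) // mulr_sumr; apply: ler_sum => j _.
  by rewrite normrM mulrC ler_wpM2r // distrC close.
have sum_gt0 : 0 < \sum_j `|lam 0 j|.
  have [k lam_k] := rV0Pn _ lam_neq0.
  by rewrite (bigD1 k) //= ltr_pwDl ?normr_gt0 // sumr_ge0.
rewrite -(ler_pM2l sum_gt0) mulr_suml.
apply: le_trans (ler_sum _ (fun k _ => norm_lamD k)) _.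
by rewrite sumr_const card_ord mulr_natr mulrnAr [e * _]mulrC.
Qed.

Section Encoders.
Variables (R : realType) (N S d : nat).
Variables (prior : seqs N S -> R) (cond : seqs N S -> 'I_N -> R).
Hypothesis pi_distr : is_next_token_distr prior cond.

Lemma dKL_ge0 f : 0 <= dKL prior cond f.
Proof.
have [[prior_ge0 _] cond_distr] := pi_distr.
by apply: sumr_ge0 => t _; rewrite mulr_ge0 ?KL_softmax_ge0.
Qed.

Lemma prior_KL_le_dKL f t : prior t * KL (cond t) (softmax (f t)) <= dKL prior cond f.
Proof.
have [[prior_ge0 _] cond_distr] := pi_distr.
rewrite /dKL (bigD1 t) //= lerDl.
by apply: sumr_ge0 => s _; rewrite mulr_ge0 ?KL_softmax_ge0.
Qed.

Lemma dKL_L_le f : encoders d f -> dKL_L d prior cond <= dKL prior cond f.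
Proof.
move=> f_enc; apply: ge_inf; last by exists f.
by exists 0 => _ [g _ <-]; apply: dKL_ge0.
Qed.

Lemma le_dKL_L m :
  (forall f, encoders d f -> m <= dKL prior cond f) -> m <= dKL_L d prior cond.
Proof.
move=> m_le; apply: lb_le_inf => [|_ [f f_enc <-]]; last exact: m_le.
by exists (dKL prior cond (fun=> 0)), (fun=> 0) => //; exists 0, (fun=> 0); rewrite mul0mx.
Qed.

Lemma dKL_L_ge0 : 0 <= dKL_L d prior cond.
Proof. by apply: le_dKL_L => f _; apply: dKL_ge0. Qed.

End Encoders.

Lemma dKL_L_eq0 (R : realType) N S d (prior : seqs N S -> R) (cond : seqs N S -> 'I_N -> R) :
  (0 < N)%N -> (N.-1 <= d)%N -> is_next_token_distr prior cond -> dKL_L d prior cond = 0.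
Proof.
case: N prior cond => // n prior cond _ le_nd pi_distr.
have [[prior_ge0 prior_sum] cond_distr] := pi_distr.
apply/le_anti; rewrite dKL_L_ge0 // andbT; apply/ler_addgt0Pr => e e_gt0; rewrite add0r.
pose q t := smooth (expR (- e)) (cond t).
have a_01 : 0 <= expR (- e) < 1 by rewrite expR_ge0 expR_lt1 oppr_lt0.
have q_gt0 t i : 0 < q t i by apply: smooth_gt0 => //; apply: (cond_distr t).1.
have q_sum t : \sum_i q t i = 1 by apply: sum_smooth => //; apply: (cond_distr t).2.
pose E t := (pid_mx d : 'M[R]_(d, n.+1)) *m centered_log (q t).
apply: le_trans (dKL_L_le pi_distr (f := fun t => pid_mx d *m E t) _) _.
  by exists (pid_mx d), E.
rewrite /dKL -[e]mul1r -prior_sum mulr_suml; apply: ler_sum => t _.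
rewrite ler_wpM2l // softmax_pid_mx_centered_log //.
by apply: KL_smooth_le => //; [apply: (cond_distr t).1 | apply: (cond_distr t).2].
Qed.

Definition uniform {R : realType} {T : finType} : T -> R := fun=> #|T|%:R^-1.

Lemma is_distr_uniform (R : realType) (T : finType) (x : T) : is_distr (@uniform R T).
Proof.
have T_gt0 : 0 < #|T|%:R :> R by rewrite ltr0n; apply/card_gt0P; exists x.
split=> [y|]; first by rewrite invr_ge0 ltW.
by rewrite sumr_const -[LHS]mulr_natr mulVf ?gt_eqF.
Qed.

Definition peaked_cond (R : realType) N S (D : R) (lab : seqs N S -> 'I_N) t : 'I_N -> R :=
  softmax (\col_i (if i == lab t then D else 0)).

Lemma is_next_token_distr_peaked (R : realType) N S (D : R) (lab : seqs N S -> 'I_N)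
    (t0 : seqs N S) :
  is_next_token_distr uniform (peaked_cond D lab).
Proof. by split=> [|t]; [apply: is_distr_uniform t0 | apply: is_distr_softmax (lab t0)]. Qed.

Section PeakedDistribution.
Variables (R : realType) (N S d : nat) (lab : seqs N S -> 'I_N).
Variables (ts : 'I_d.+1 -> seqs N S) (l : 'I_N).
Hypotheses (lab_ts_inj : injective (lab \o ts)) (lab_ts_neq : forall j, lab (ts j) != l).

(* exceeds the bound (3 + 3) * d.+1 of low_rank_centered_logits_bound *)
Let D : R := 6 * d.+1%:R + 1.
Let c : R := (N%:R * expR D)^-1.
Let n := #|{: seqs N S}|.

Lemma dKL_peaked_ge f : encoders d f -> c / 4 / n%:R <= dKL uniform (peaked_cond D lab) f.
Proof.
move=> [W [E ->]]; rewrite leNgt; apply/negP => small.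
have pi_distr := is_next_token_distr_peaked D lab (ts ord0).
have D_ge0 : 0 <= D by rewrite addr_ge0 ?mulr_ge0 ?ler0n.
have cond_ge t i : c <= peaked_cond D lab t i.
  by apply: softmax_ge => j; rewrite mxE; case: ifP; rewrite ?lexx ?D_ge0.
have KL_small j : KL (peaked_cond D lab (ts j)) (softmax (W *m E (ts j))) < c / 4.
  have n_gt0 : 0 < n%:R^-1 :> R by rewrite invr_gt0 ltr0n; apply/card_gt0P; exists (ts j).
  rewrite -(ltr_pM2r n_gt0) mulrC.
  exact: le_lt_trans (prior_KL_le_dKL pi_distr (fun t => W *m E t) (ts j)) small.
have close j i :
    `|ln (softmax (W *m E (ts j)) i) - ln (peaked_cond D lab (ts j) i)| <= 3.
  apply: KL_term_small; rewrite ?softmax_gt0 //.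
  apply: le_lt_trans (KL_term_le_KL _ _ _ _ _) (lt_le_trans (KL_small j) _).
  - by move=> k; rewrite ltW ?softmax_gt0.
  - exact: softmax_gt0.
  - exact: sum_softmax (lab (ts j)).
  - exact: sum_softmax (lab (ts j)).
  - by rewrite ler_pM2r ?invr_gt0.
suff : D <= (3 + 3) * d.+1%:R by rewrite /D; lra.
apply: (low_rank_centered_logits_bound (W := W) (E := E \o ts) lab_ts_inj lab_ts_neq) => j i.
have := ln_softmax_close_centered i l (close j).
by rewrite !mxE [l == _]eq_sym (negbTE (lab_ts_neq j)) subr0.
Qed.

Lemma dKL_L_peaked_gt0 : 0 < dKL_L d uniform (peaked_cond D lab).
Proof.
apply: lt_le_trans (le_dKL_L dKL_peaked_ge).
rewrite !divr_gt0 ?invr_gt0 ?mulr_gt0 ?expR_gt0 ?ltr0n //.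
  exact: leq_ltn_trans (leq0n l) (ltn_ord l).
by apply/card_gt0P; exists (ts ord0).
Qed.

End PeakedDistribution.

Lemma exists_next_token_distr_dKL_L_gt0 (R : realType) N S d :
  (0 < S)%N -> (d.+1 < N)%N ->
  exists (prior : seqs N S -> R) (cond : seqs N S -> 'I_N -> R),
    is_next_token_distr prior cond /\ 0 < dKL_L d prior cond.
Proof.
case: N => // n S_gt0; rewrite ltnS => lt_dn.
pose lab (t : seqs n.+1 S) := head ord0 t.
pose ts j : seqs n.+1 S := nseq_tuple S (widen_ord (leqW lt_dn) j).
have head_nseq (x : 'I_n.+1) : head ord0 (nseq S x) = x by case: S S_gt0 {lab ts}.
have lab_ts j : lab (ts j) = widen_ord (leqW lt_dn) j := head_nseq _.
exists uniform, (peaked_cond (6 * d.+1%:R + 1) lab); split.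
  exact: is_next_token_distr_peaked (ts ord0).
apply: (@dKL_L_peaked_gt0 R n.+1 S d lab ts ord_max) => [j k | j].
  by rewrite /= !lab_ts => /(congr1 val) /= /val_inj.
by rewrite lab_ts -val_eqE /= neq_ltn (leq_trans (ltn_ord j) lt_dn).
Qed.

Theorem proposition2 (R : realType) (N S d : nat) :
  (2 <= N)%N -> (1 <= S)%N -> (1 <= d)%N ->
  ((N - 1 <= d)%N ->
     forall (prior : seqs N S -> R) (cond : seqs N S -> 'I_N -> R),
       is_next_token_distr prior cond -> dKL_L d prior cond = 0)
  /\
  ((d < N - 1)%N ->
     exists (prior : seqs N S -> R) (cond : seqs N S -> 'I_N -> R),
       is_next_token_distr prior cond /\ 0 < dKL_L d prior cond).
Proof.
move=> N_ge2 S_gt0 _; have N_gt0 : (0 < N)%N := ltnW N_ge2.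
split=> [le_d | lt_d].
  by move=> prior cond; apply: dKL_L_eq0; rewrite // -subn1.
by apply: exists_next_token_distr_dKL_L_gt0 => //; lia.
Qed.
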